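(* Let $\mathcal{D}[t]\subset\mathcal{H}\subset\mathcal{D}^\times[t^\times]$ be a rigged Hilbert space with $\mathcal{D}[t]$ complete and reflexive, and let $\{\xi_n\}\subset\mathcal{D}$ be a Riesz-Fischer-like sequence. Define the operator $V$ by $$D(V)=\Big\{\Phi\in\mathcal{D}^\times:\ \sum_{k=1}^\infty|\langle\Phi,\xi_k\rangle|^2<\infty\Big\},\qquad V\Phi=\{\langle\Phi,\xi_k\rangle\}_{k\in\mathbb{N}}.$$ Then $V:D(V)\to\ell^2$ is surjective.
   Context: A rigged Hilbert space $\mathcal{D}[t]\subset\mathcal{H}\subset\mathcal{D}^\times[t^\times]$: $\mathcal{D}$ is a dense subspace of the Hilbert space $\mathcal{H}$ with a locally convex topology $t$ finer than the norm topology, $\mathcal{D}^\times$ is the space of continuous conjugate-linear functionals on $\mathcal{D}[t]$ with the strong dual topology $t^\times$, $\mathcal{H}\subset\mathcal{D}^\times$, and the duality form $\langle\Phi,\eta\rangle$ (value of $\Phi\in\mathcal{D}^\times$ at $\eta\in\mathcal{D}$) extends the inner product. $\mathcal{L}(\mathcal{D},\mathcal{D}^\times)$ denotes the continuous linear maps $\mathcal{D}[t]\to\mathcal{D}^\times[t^\times]$; for $X$ in it, the adjoint $X^\dagger\in\mathcal{L}(\mathcal{D},\mathcal{D}^\times)$ is defined by $\langle X^\dagger\eta,\xi\rangle=\overline{\langle X\xi,\eta\rangle}$. $\mathcal{C}(\mathcal{D},\mathcal{H})$ is the set of $X\in\mathcal{L}(\mathcal{D},\mathcal{D}^\times)$ mapping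 $\mathcal{D}$ into $\mathcal{H}$ and continuous from $\mathcal{D}[t]$ into $\mathcal{H}$; for such $X$, $X^\dagger$ extends continuously to a map $\mathcal{H}\to\mathcal{D}^\times$. A sequence $\{\xi_n\}\subset\mathcal{D}$ is Riesz-Fischer-like if for every orthonormal basis $\{e_n\}$ of $\mathcal{H}$ there exists $S\in\mathcal{C}(\mathcal{D},\mathcal{H})$ with $S\xi_n=e_n$ for all $n$. *)

From mathcomp Require Import all_boot all_order all_algebra.
From mathcomp Require Import complex reals.
Import GRing.Theory Num.Theory.
Local Open Scope ring_scope.
Local Open Scope complex_scope.

Set Implicit Arguments. Unset Strict Implicit. Unset Printing Implicit Defensive.

Section RHS.
Variable R : realType.
Local Notation C := (R[i]).

Variable H : lmodType C.

Definition is_inner_product (ip : H -> H -> C) : Prop :=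
  [/\ (forall (a : C) (x y z : H), ip (a *: x + y) z = a * ip x z + ip y z),
      (forall x y : H, ip y x = (ip x y)^*),
      (forall x : H, 0 <= ip x x) &
      (forall x : H, ip x x = 0 -> x = 0)].

Definition hnorm (ip : H -> H -> C) (x : H) : C := sqrtC (ip x x).

Definition hilbert_complete (ip : H -> H -> C) : Prop :=
  forall x : nat -> H,
    (forall eps : C, 0 < eps -> exists N, forall m n, (N <= m)%N -> (N <= n)%N ->
        hnorm ip (x m - x n) < eps) ->
    exists l : H, forall eps : C, 0 < eps -> exists N, forall n, (N <= n)%N ->
        hnorm ip (x n - l) < eps.

Definition is_hilbert_space (ip : H -> H -> C) : Prop :=
  is_inner_product ip /\ hilbert_complete ip.

Definition orthonormal_basis (ip : H -> H -> C) (e : nat -> H) : Prop :=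
  (forall m n, ip (e m) (e n) = if m == n then 1 else 0) /\
  (forall h : H, (forall n, ip h (e n) = 0) -> h = 0).

(* The dense subspace D with a locally convex topology t, given by a   *)
(* family of seminorms p : I -> H -> C (only their values on D matter). *)
Definition is_subspace (D : H -> Prop) : Prop :=
  D 0 /\ forall (a : C) x y, D x -> D y -> D (a *: x + y).

Definition is_dense (ip : H -> H -> C) (D : H -> Prop) : Prop :=
  forall (h : H) (eps : C), 0 < eps -> exists d, D d /\ hnorm ip (h - d) < eps.

Definition seminorm_family (D : H -> Prop) (I : Type) (p : I -> H -> C) : Prop :=
  forall i : I,
    [/\ (forall x, D x -> 0 <= p i x),
        (forall x y, D x -> D y -> p i (x + y) <= p i x + p i y) &
        (forall (a : C) x, D x -> p i (a *: x) = `|a| * p i x)].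

(* x lies in the basic t-neighbourhood of x0 given by the finitely many
   seminorms p (F j), j < n, and the radius d *)
Definition t_small (I : Type) (p : I -> H -> C) (n : nat) (F : 'I_n -> I)
    (d : C) (x0 x : H) : Prop :=
  forall j : 'I_n, p (F j) (x - x0) < d.

Definition t_finer_than_norm (ip : H -> H -> C) (D : H -> Prop) (I : Type)
    (p : I -> H -> C) : Prop :=
  forall x0, D x0 -> forall eps : C, 0 < eps ->
    exists n (F : 'I_n -> I) (d : C), 0 < d /\
      forall x, D x -> t_small p F d x0 x -> hnorm ip (x - x0) < eps.

Definition lc_complete (D : H -> Prop) (I : Type) (p : I -> H -> C) : Prop :=
  forall (J : Type) (le : J -> J -> Prop) (x : J -> H),
    (exists j : J, True) ->
    (forall j, le j j) -> (forall i j k, le i j -> le j k -> le i k) ->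
    (forall i j, exists k, le i k /\ le j k) ->
    (forall j, D (x j)) ->
    (forall n (F : 'I_n -> I) (d : C), 0 < d -> exists j0, forall j k,
        le j0 j -> le j0 k -> t_small p F d (x j) (x k)) ->
    exists l, D l /\ forall n (F : 'I_n -> I) (d : C), 0 < d ->
        exists j0, forall j, le j0 j -> t_small p F d l (x j).

Definition t_bounded (D : H -> Prop) (I : Type) (p : I -> H -> C)
    (A : H -> Prop) : Prop :=
  (forall x, A x -> D x) /\ forall i : I, exists M : C, forall x, A x -> p i x <= M.

(* D^x : continuous conjugate-linear functionals on D[t]; a functional  *)
(* is represented by a function H -> C (only its values on D matter), *)
(* <Phi, eta> := Phi eta.                                              *)
Definition in_Dx (D : H -> Prop) (I : Type) (p : I -> H -> C) (Phi : H -> C) : Prop :=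
  (forall (a : C) x y, D x -> D y -> Phi (a *: x + y) = a^* * Phi x + Phi y) /\
  (forall x0, D x0 -> forall eps : C, 0 < eps ->
    exists n (F : 'I_n -> I) (d : C), 0 < d /\
      forall x, D x -> t_small p F d x0 x -> `|Phi x - Phi x0| < eps).

(* bounded subsets of D^x[t^x] (t^x = strong dual topology: uniform
   convergence on the bounded subsets of D[t]) *)
Definition Dx_bounded (D : H -> Prop) (I : Type) (p : I -> H -> C)
    (B : (H -> C) -> Prop) : Prop :=
  (forall Phi, B Phi -> in_Dx D p Phi) /\
  forall A, t_bounded D p A ->
    exists M : C, forall Phi eta, B Phi -> A eta -> `|Phi eta| <= M.

(* Phi lies in the basic t^x-neighbourhood of Phi0 given by the bounded
   sets A j, j < n, and the radius d *)
Definition tx_small (n : nat) (A : 'I_n -> H -> Prop) (d : C)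
    (Phi0 Phi : H -> C) : Prop :=
  forall (j : 'I_n) eta, A j eta -> `|Phi eta - Phi0 eta| < d.

Definition in_Dxx (D : H -> Prop) (I : Type) (p : I -> H -> C)
    (psi : (H -> C) -> C) : Prop :=
  (forall (a : C) Phi Psi, in_Dx D p Phi -> in_Dx D p Psi ->
      psi (fun x => a * Phi x + Psi x) = a^* * psi Phi + psi Psi) /\
  (forall Phi0, in_Dx D p Phi0 -> forall eps : C, 0 < eps ->
    exists n (A : 'I_n -> H -> Prop) (d : C),
      (forall j, t_bounded D p (A j)) /\ 0 < d /\
      forall Phi, in_Dx D p Phi -> tx_small A d Phi0 Phi -> `|psi Phi - psi Phi0| < eps).

(* reflexivity of D[t]: the canonical map eta |-> (Phi |-> <Phi,eta>^* )
   from D[t] into the strong bidual D^xx is onto and a topological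
   isomorphism, i.e. t coincides with the topology of uniform convergence
   on the bounded subsets of D^x[t^x]. *)
Definition lc_reflexive (D : H -> Prop) (I : Type) (p : I -> H -> C) : Prop :=
  [/\ (forall psi, in_Dxx D p psi ->
         exists eta, D eta /\ forall Phi, in_Dx D p Phi -> psi Phi = (Phi eta)^*),
      (* every t-neighbourhood contains a strong-bidual neighbourhood *)
      (forall eta0, D eta0 -> forall n (F : 'I_n -> I) (d : C), 0 < d ->
         exists m (B : 'I_m -> (H -> C) -> Prop) (d' : C),
           (forall j, Dx_bounded D p (B j)) /\ 0 < d' /\
           forall eta, D eta ->
             (forall (j : 'I_m) Phi, B j Phi -> `|Phi eta - Phi eta0| < d') ->
             t_small p F d eta0 eta) &
      (* every strong-bidual neighbourhood contains a t-neighbourhood *)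
      (forall eta0, D eta0 -> forall m (B : 'I_m -> (H -> C) -> Prop) (d' : C),
         (forall j, Dx_bounded D p (B j)) -> 0 < d' ->
         exists n (F : 'I_n -> I) (d : C), 0 < d /\
           forall eta, D eta -> t_small p F d eta0 eta ->
             forall (j : 'I_m) Phi, B j Phi -> `|Phi eta - Phi eta0| < d')].

Definition rigged_hilbert_space (ip : H -> H -> C) (D : H -> Prop) (I : Type)
    (p : I -> H -> C) : Prop :=
  [/\ is_hilbert_space ip, is_subspace D, is_dense ip D,
      seminorm_family D p & t_finer_than_norm ip D p].

Definition in_L (D : H -> Prop) (I : Type) (p : I -> H -> C) (X : H -> H -> C) : Prop :=
  [/\ (forall eta, D eta -> in_Dx D p (X eta)),
      (forall (a : C) x y zeta, D x -> D y -> D zeta ->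
         X (a *: x + y) zeta = a * X x zeta + X y zeta) &
      (forall eta0, D eta0 -> forall m (A : 'I_m -> H -> Prop) (eps : C),
         (forall j, t_bounded D p (A j)) -> 0 < eps ->
         exists n (F : 'I_n -> I) (d : C), 0 < d /\
           forall eta, D eta -> t_small p F d eta0 eta -> tx_small A eps (X eta0) (X eta))].

(* C(D, H): elements of L(D,D^x) mapping D into H, continuous D[t] -> H;
   X : H -> H is identified with eta |-> <X eta, .> (H ⊂ D^x) *)
Definition in_CDH (ip : H -> H -> C) (D : H -> Prop) (I : Type) (p : I -> H -> C)
    (X : H -> H) : Prop :=
  in_L D p (fun eta => ip (X eta)) /\
  (forall eta0, D eta0 -> forall eps : C, 0 < eps ->
    exists n (F : 'I_n -> I) (d : C), 0 < d /\
      forall eta, D eta -> t_small p F d eta0 eta -> hnorm ip (X eta - X eta0) < eps).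

Definition riesz_fischer_like (ip : H -> H -> C) (D : H -> Prop) (I : Type)
    (p : I -> H -> C) (xi : nat -> H) : Prop :=
  (forall n, D (xi n)) /\
  forall e : nat -> H, orthonormal_basis ip e ->
    exists S : H -> H, in_CDH ip D p S /\ forall n, S (xi n) = e n.

End RHS.

(* ell^2: square-summable complex sequences (nonnegative series with
   bounded partial sums) *)
Definition in_l2 (R : realType) (c : nat -> R[i]) : Prop :=
  exists M : R[i], forall N : nat, \sum_(k < N) `|c k| ^+ 2 <= M.

(* Apply the Riesz-Fischer-like property to an orthonormal basis {e_n}: this
   gives S in C(D,H) with S xi_n = e_n.  By the Riesz-Fischer theorem in H
   there is h with <h, e_n> = c_n, and Phi := S^dagger h, i.e.
   <Phi, eta> = <h, S eta>, is a continuous conjugate-linear functional on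
   D[t] with <Phi, xi_n> = c_n. *)
From mathcomp Require Import all_boot all_order all_algebra.
From mathcomp Require Import complex reals classical_sets boolp.
From mathcomp Require Import ring lra.
Import Order.TTheory GRing.Theory Num.Theory.
Local Open Scope ring_scope.
Local Open Scope classical_set_scope.
Set Implicit Arguments. Unset Strict Implicit.

Lemma complex_ge0_real (R : realType) (x : R[i]) : 0 <= x -> x = (complex.Re x)%:C%C.
Proof. by case: x => a b; rewrite lecE /= => /andP[/eqP-> _]. Qed.

Lemma bounded_nonneg_near_max (R : realType) (s : nat -> R[i]) (M : R[i]) :
  (forall n, 0 <= s n) -> (forall n, s n <= M) ->
  forall eps, 0 < eps -> exists N, forall m, s m < s N + eps.
Proof.
move=> s_ge0 s_leM eps eps_gt0.
have sE n : s n = (complex.Re (s n))%:C%C by apply: complex_ge0_real.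
have epsE : eps = (complex.Re eps)%:C%C by apply/complex_ge0_real/ltW.
have Reeps_gt0 : 0 < complex.Re eps by rewrite -ltcR -epsE.
pose E := range (fun n => complex.Re (s n)).
have supE : has_sup E.
  split; first by exists (complex.Re (s 0%N)), 0%N.
  exists (complex.Re M) => _ [n _ <-].
  by move: (s_leM n); rewrite lecE => /andP[_].
have [_ [N _ <-] nearN] := sup_adherent Reeps_gt0 supE.
exists N => m; rewrite epsE (sE m) (sE N) -rmorphD ltcR.
have : complex.Re (s m) <= sup E by apply: sup_upper_bound => //; exists m.
lra.
Qed.

Section InnerProduct.
Variables (R : realType) (H : lmodType R[i]) (ip : H -> H -> R[i]).
Hypothesis ip_inner : is_inner_product ip.

Lemma ipDl x y z : ip (x + y) z = ip x z + ip y z.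
Proof. by case: ip_inner => lin _ _ _; have := lin 1 x y z; rewrite scale1r mul1r. Qed.

Lemma ip0l z : ip 0 z = 0.
Proof. by apply: (addIr (ip 0 z)); rewrite -ipDl !add0r. Qed.

Lemma ipZl a x z : ip (a *: x) z = a * ip x z.
Proof. by case: ip_inner => lin _ _ _; have := lin a x 0 z; rewrite !addr0 ip0l addr0. Qed.

Lemma ipNl x z : ip (- x) z = - ip x z.
Proof. by rewrite -scaleN1r ipZl mulN1r. Qed.

Lemma ipBl x y z : ip (x - y) z = ip x z - ip y z.
Proof. by rewrite ipDl ipNl. Qed.

Lemma ip_suml (J : Type) (r : seq J) (P : pred J) (F : J -> H) z :
  ip (\sum_(j <- r | P j) F j) z = \sum_(j <- r | P j) ip (F j) z.
Proof. exact: (big_morph (ip^~ z) (fun x y => ipDl x y z) (ip0l z)). Qed.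

Lemma ipC x y : ip y x = (ip x y)^*.
Proof. by case: ip_inner => _ sym _ _; apply: sym. Qed.

Lemma ipDr x y z : ip x (y + z) = ip x y + ip x z.
Proof. by rewrite ipC ipDl rmorphD /= -!ipC. Qed.

Lemma ipZr a x y : ip x (a *: y) = a^* * ip x y.
Proof. by rewrite ipC ipZl rmorphM /= -ipC. Qed.

Lemma ipBr x y z : ip x (y - z) = ip x y - ip x z.
Proof. by rewrite -scaleN1r ipDr ipZr rmorphN1 mulN1r. Qed.

Lemma ip0r z : ip z 0 = 0.
Proof. by rewrite ipC ip0l conjC0. Qed.

Lemma ipxx_ge0 x : 0 <= ip x x.
Proof. by case: ip_inner => _ _ pos _; apply: pos. Qed.

Lemma ipxx_eq0 x : ip x x = 0 -> x = 0.
Proof. by case: ip_inner => _ _ _; apply. Qed.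

Lemma hnorm_ge0 x : 0 <= hnorm ip x.
Proof. by rewrite sqrtC_ge0 ipxx_ge0. Qed.

Lemma hnorm_sqr x : hnorm ip x ^+ 2 = ip x x.
Proof. exact: sqrtCK. Qed.

Lemma hnormN x : hnorm ip (- x) = hnorm ip x.
Proof. by rewrite /hnorm ipNl ipC ipNl rmorphN /= opprK -ipC. Qed.

Lemma ipxx_conj x : (ip x x)^* = ip x x.
Proof. exact/conj_Creal/ger0_real/ipxx_ge0. Qed.

Lemma cauchy_schwarz_sqr x y : `|ip x y| ^+ 2 <= ip x x * ip y y.
Proof.
have [yy0|yy_neq0] := eqVneq (ip y y) 0.
  by rewrite (ipxx_eq0 yy0) ip0r ip0r normr0 expr0n mulr0.
set A := ip x x; set B := ip y y; set z := ip x y.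
have B_gt0 : 0 < B by rewrite lt0r yy_neq0 ipxx_ge0.
have := ipxx_ge0 (x - (z / B) *: y).
rewrite !ipBl !ipBr !ipZl !ipZr -/A -/B -/z (ipC x y) -/z.
rewrite rmorphM fmorphV /= ipxx_conj -/B normCK.
have -> : A - z^* / B * z - (z / B * z^* - z / B * (z^* / B * B))
          = (A * B - z * z^*) / B by field.
by rewrite pmulr_lge0 ?invr_gt0 // subr_ge0.
Qed.

Lemma cauchy_schwarz x y : `|ip x y| <= hnorm ip x * hnorm ip y.
Proof.
rewrite -(ler_pXn2r (isT : (0 < 2)%N)) ?nnegrE ?mulr_ge0 ?hnorm_ge0 //.
by rewrite exprMn !hnorm_sqr cauchy_schwarz_sqr.
Qed.

Lemma dense_orthogonal_eq0 (D : H -> Prop) w :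
  is_dense ip D -> (forall d, D d -> ip w d = 0) -> w = 0.
Proof.
move=> D_dense w_perp; apply: ipxx_eq0; apply/eqP; apply: contraT => ww_neq0.
have w_gt0 : 0 < hnorm ip w by rewrite sqrtC_gt0 lt0r ww_neq0 ipxx_ge0.
have [d [Dd close_d]] := D_dense w _ w_gt0.
have : `|ip w (w - d)| < hnorm ip w * hnorm ip w.
  by apply: le_lt_trans (cauchy_schwarz _ _) _; rewrite ltr_pM2l.
by rewrite ipBr (w_perp d Dd) subr0 -expr2 hnorm_sqr ger0_norm ?ipxx_ge0 // ltxx.
Qed.

Section OrthonormalSums.
Variable e : nat -> H.
Hypothesis e_orthonormal : forall m n, ip (e m) (e n) = if m == n then 1 else 0.

Lemma ip_sum_orthonormal (r : seq nat) (c : nat -> R[i]) j : uniq r ->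
  ip (\sum_(k <- r) c k *: e k) (e j) = if j \in r then c j else 0.
Proof.
move=> r_uniq; rewrite ip_suml.
have delta k : ip (c k *: e k) (e j) = if k == j then c j else 0.
  by rewrite ipZl e_orthonormal; case: eqP => [->|_]; rewrite ?mulr1 ?mulr0.
case: ifP => [j_in_r|j_notin_r].
  rewrite (bigD1_seq j) //= delta eqxx big1 ?addr0 // => k /negPf k_neq_j.
  by rewrite delta k_neq_j.
rewrite big1_seq // => k /= k_in_r; rewrite delta; case: eqP => // k_eq_j.
by rewrite -k_eq_j k_in_r in j_notin_r.
Qed.

Lemma ip_sum_orthonormal_self (r : seq nat) (c : nat -> R[i]) : uniq r ->
  let s := \sum_(k <- r) c k *: e k in ip s s = \sum_(k <- r) `|c k| ^+ 2.
Proof.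
move=> r_uniq s; rewrite {1}/s ip_suml big_seq [RHS]big_seq.
apply: eq_bigr => k k_in_r.
by rewrite ipZl ipC ip_sum_orthonormal // k_in_r normCK.
Qed.

Lemma hnorm_orthonormal j : hnorm ip (e j) = 1.
Proof. by rewrite /hnorm e_orthonormal eqxx sqrtC1. Qed.

Lemma riesz_fischer (c : nat -> R[i]) :
  hilbert_complete ip -> in_l2 c -> exists h, forall j, ip h (e j) = c j.
Proof.
move=> H_complete [M sum_leM].
pose s m := \sum_(0 <= k < m) c k *: e k.
pose q m := \sum_(0 <= k < m) `|c k| ^+ 2.
have s_gap n m : (n <= m)%N -> ip (s m - s n) (s m - s n) = q m - q n.
  move=> le_nm; rewrite /s /q.
  rewrite (big_cat_nat (leq0n n) le_nm) (big_cat_nat (leq0n n) le_nm) /=.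
  rewrite addrAC subrr add0r addrAC subrr add0r.
  by rewrite ip_sum_orthonormal_self ?iota_uniq.
have q_ge0 m : 0 <= q m by apply: sumr_ge0 => k _; apply: exprn_ge0.
have q_leM m : q m <= M by rewrite /q big_mkord.
have q_mono n m : (n <= m)%N -> q n <= q m.
  by move=> le_nm; rewrite -subr_ge0 -s_gap ?ipxx_ge0.
have s_cauchy eps : 0 < eps -> exists N, forall m n, (N <= m)%N -> (N <= n)%N ->
    hnorm ip (s m - s n) < eps.
  move=> eps_gt0.
  have [N q_nearN] := bounded_nonneg_near_max q_ge0 q_leM (exprn_gt0 2 eps_gt0).
  have close n m : (N <= n)%N -> (n <= m)%N -> hnorm ip (s m - s n) < eps.
    move=> le_Nn le_nm.
    rewrite -(ltr_pXn2r (isT : (0 < 2)%N)) ?nnegrE ?hnorm_ge0 ?(ltW eps_gt0) //.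
    rewrite hnorm_sqr s_gap //; apply: le_lt_trans (_ : q m - q N < eps ^+ 2).
      by rewrite lerD2l lerN2 q_mono.
    by rewrite ltrBlDl.
  exists N => m n le_Nm le_Nn; case: (leqP n m) => [|/ltnW] le_mn.
    exact: close.
  by rewrite -opprB hnormN close.
have [l s_to_l] := H_complete s s_cauchy.
exists l => j; apply/eqP; rewrite -subr_eq0; apply: contraT => neq0.
have [N close] : exists N, forall n, (N <= n)%N ->
    hnorm ip (s n - l) < `|ip l (e j) - c j|.
  by apply: s_to_l; rewrite normr_gt0.
have s_e : ip (s (maxn N j.+1)) (e j) = c j.
  by rewrite ip_sum_orthonormal ?iota_uniq // mem_index_iota leq_maxr.
have := cauchy_schwarz (s (maxn N j.+1) - l) (e j).
rewrite hnorm_orthonormal mulr1 => /le_lt_trans/(_ (close _ (leq_maxl _ _))).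
by rewrite ipBl s_e -normrN opprB ltxx.
Qed.
End OrthonormalSums.
End InnerProduct.

Section CDHFunctionals.
Variables (R : realType) (H : lmodType R[i]) (ip : H -> H -> R[i]).
Variables (D : H -> Prop) (I : Type) (p : I -> H -> R[i]).
Hypotheses (ip_inner : is_inner_product ip) (D_dense : is_dense ip D).

Lemma CDH_linear S : in_CDH ip D p S ->
  forall a x y, D x -> D y -> S (a *: x + y) = a *: S x + S y.
Proof.
move=> [[_ S_lin _] _] a x y Dx Dy; apply/eqP; rewrite -subr_eq0; apply/eqP.
apply: (dense_orthogonal_eq0 ip_inner D_dense) => zeta Dzeta.
by rewrite !(ipBl ip_inner, ipDl ip_inner, ipZl ip_inner) S_lin ?subrr.
Qed.

Lemma CDH_ip_in_Dx S h : in_CDH ip D p S -> in_Dx D p (fun eta => ip h (S eta)).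
Proof.
move=> S_CDH; split=> [a x y Dx Dy|x0 Dx0 eps eps_gt0].
  by rewrite CDH_linear // (ipDr ip_inner) (ipZr ip_inner).
have h_ge0 := hnorm_ge0 ip_inner h.
have h1_gt0 : 0 < hnorm ip h + 1 by rewrite ltr_wpDl.
have [n [F [d [d_gt0 S_cont]]]] :=
  S_CDH.2 x0 Dx0 _ (divr_gt0 eps_gt0 h1_gt0).
exists n, F, d; split=> // x Dx x_near.
rewrite -(ipBr ip_inner); apply: le_lt_trans (cauchy_schwarz ip_inner _ _) _.
apply: le_lt_trans (ler_wpM2l h_ge0 (ltW (S_cont x Dx x_near))) _.
by rewrite mulrA ltr_pdivrMr // mulrDr mulr1 mulrC ltrDl.
Qed.
End CDHFunctionals.

Theorem proposition2p15 (R : realType) (H : lmodType R[i]) (ip : H -> H -> R[i])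
    (D : H -> Prop) (I : Type) (p : I -> H -> R[i]) (xi : nat -> H) :
  rigged_hilbert_space ip D p ->
  (exists e : nat -> H, orthonormal_basis ip e) ->
  lc_complete D p ->
  lc_reflexive D p ->
  riesz_fischer_like ip D p xi ->
  (* V : D(V) -> ell^2 is surjective *)
  forall c : nat -> R[i], in_l2 c ->
    exists Phi : H -> R[i],
      [/\ in_Dx D p Phi, in_l2 (fun k => Phi (xi k)) & forall k, Phi (xi k) = c k].
Proof.
move=> [[ip_inner H_complete] _ D_dense _ _] [e e_basis] _ _ [_ xi_RF] c c_l2.
have [S [S_CDH S_xi]] := xi_RF e e_basis.
have [h h_e] := riesz_fischer ip_inner e_basis.1 H_complete c_l2.
have Phi_xi k : ip h (S (xi k)) = c k by rewrite S_xi h_e.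
exists (fun eta => ip h (S eta)); split=> //.
  exact: CDH_ip_in_Dx.
by under eq_fun do rewrite Phi_xi.
Qed.
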